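(* Let $D$ be the dihedral group of order 8, let $\lambda_1,\lambda_2:D\to\mathbb Z/2\mathbb Z$ be homomorphisms each with kernel isomorphic to $\mathbb Z/2\times\mathbb Z/2$, and let $D\curlywedge D=\{(u,v)\in D\times D:\lambda_1(u)=\lambda_2(v)\}$. Then $D\curlywedge D$ contains a unique abelian subgroup of order 16; this subgroup equals $\ker(\lambda_1)\times\ker(\lambda_2)$ and is isomorphic to $(\mathbb Z/2\mathbb Z)^4$. *)

From HB Require Import structures.
From mathcomp Require Import all_boot all_order all_algebra all_fingroup all_solvable.
Set Implicit Arguments. Unset Strict Implicit. Unset Printing Implicit Defensive.

Local Open Scope group_scope.

Definition fibprod (gT1 gT2 rT : finGroupType) (f1 : gT1 -> rT) (f2 : gT2 -> rT)
  (A : {set gT1}) (B : {set gT2}) : {set gT1 * gT2} :=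
  [set uv | [&& uv.1 \in A, uv.2 \in B & f1 uv.1 == f2 uv.2]].

From HB Require Import structures.
From mathcomp Require Import all_boot all_order all_algebra all_fingroup all_solvable.

(* Let K_i = ker lam_i. Every (x, y) in D ⋏ D with x in K_1 already lies in
   K_1 x K_2, so an abelian H in D ⋏ D meets K_1 x K_2 in index at most 2.
   If H contained some (u, v) outside K_1 x K_2, this intersection would
   centralise (u, v), hence lie in (K_1 ∩ C(u)) x (K_2 ∩ C(v)); but an abelian
   maximal subgroup K of D and u outside K satisfy K ∩ C(u) ⊆ Z(D), which has
   order 2. So |H| <= 2 * 2 * 2 = 8. Hence an abelian H of order 16 is
   K_1 x K_2, an elementary abelian 2-group of order 16. *)

Set Implicit Arguments.
Unset Strict Implicit.
Unset Printing Implicit Defensive.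

Local Open Scope group_scope.

Section GroupFacts.

Variable gT : finGroupType.
Implicit Types G H K M : {group gT}.

Lemma card_mul_leq_cardI G H M :
  H \subset G -> M \subset G -> #|H| * #|M| <= #|G| * #|H :&: M|.
Proof.
by move=> sHG sMG; rewrite mul_cardG leq_mul2r subset_leq_card ?orbT ?mul_subG.
Qed.

Lemma abelian_maximal_cent1_sub_center G K u :
  maximal K G -> abelian K -> u \in G :\: K -> K :&: 'C[u] \subset 'Z(G).
Proof.
move=> maxK cKK /setDP[Gu notKu].
have sKG := proper_sub (maxgroupp maxK).
have defG : K <*> <[u]> = G.
  apply/eqP; apply: contraR notKu => neKuG.
  have ltKuG : K <*> <[u]> \proper G.
    by rewrite properEneq neKuG join_subG sKG cycle_subG.
  case/maxgroupP: maxK => _ /(_ _ ltKuG (joing_subl _ _)) <-.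
  exact: subsetP (joing_subr K <[u]>) u (cycle_id u).
by rewrite subsetI (subset_trans (subsetIl _ _)) // -defG centY cent_cycle setSI.
Qed.

End GroupFacts.

Section DirectProduct.

Variables gT1 gT2 : finGroupType.

Lemma cent1X (u : gT1) (v : gT2) : 'C[(u, v)] = setX 'C[u] 'C[v].
Proof. by apply/setP => -[a b]; rewrite in_setX !cent1E /= xpair_eqE. Qed.

Lemma setX_abelem p (H1 : {group gT1}) (H2 : {group gT2}) :
  p.-abelem (setX H1 H2) = p.-abelem H1 && p.-abelem H2.
Proof.
rewrite (dprod_abelem p (setX_dprod H1 H2)).
by rewrite -(isog_abelem (isog_setX1 gT2 H1)) -(isog_abelem (isog_set1X gT1 H2)).
Qed.

Lemma setXT : setX [set: gT1] [set: gT2] = [set: gT1 * gT2].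
Proof. by apply/setP => -[a b]; rewrite !inE. Qed.

Lemma setT_prod_abelem p :
  p.-abelem [set: gT1 * gT2] = p.-abelem [set: gT1] && p.-abelem [set: gT2].
Proof. by rewrite -setXT setX_abelem. Qed.

End DirectProduct.

Section FibreProduct.

Variables (gT1 gT2 rT : finGroupType) (G1 : {group gT1}) (G2 : {group gT2}).
Variables (f1 : {morphism G1 >-> rT}) (f2 : {morphism G2 >-> rT}).

Let P := fibprod f1 f2 G1 G2.
Let K := setX ('ker f1) ('ker f2).

Let in_ker (aT : finGroupType) (D : {group aT}) (f : {morphism D >-> rT}) x :
  x \in D -> (x \in 'ker f) = (f x == 1).
Proof. by move=> Dx; apply/kerP/eqP. Qed.

Lemma setX_ker_sub_fibprod : K \subset P.
Proof.
apply/subsetP => -[a b] /setXP[ka kb]; have Da := dom_ker ka; have Db := dom_ker kb.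
by rewrite /P /fibprod inE /= Da Db (mker ka) (mker kb) eqxx.
Qed.

Lemma fibprod_mem_kerXl x : x \in P -> (x \in K) = (x.1 \in 'ker f1).
Proof.
case: x => a b; rewrite /P /fibprod inE /= => /and3P[Da Db /eqP fab].
by rewrite in_setX !in_ker // fab andbb.
Qed.

Lemma fibprod_mem_kerXr x : x \in P -> (x \in K) = (x.2 \in 'ker f2).
Proof.
case: x => a b; rewrite /P /fibprod inE /= => /and3P[Da Db /eqP fab].
by rewrite in_setX !in_ker // fab andbb.
Qed.

Lemma card_sub_fibprod_kerX (H : {group gT1 * gT2}) :
  H \subset P -> #|H| * #|'ker f1| <= #|G1| * #|H :&: K|.
Proof.
move=> sHP; have sHG : H \subset setX G1 G2.
  by apply: subset_trans sHP _; apply/subsetP => x; rewrite !inE => /and3P[-> ->].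
have sKG : setX ('ker f1) G2 \subset setX G1 G2.
  by rewrite setXS //; apply/subsetP/dom_ker.
have := card_mul_leq_cardI sHG sKG.
have -> : H :&: setX ('ker f1) G2 = H :&: K.
  apply/setP => -[a b]; rewrite !in_setI; apply: andb_id2l => Hab.
  rewrite fibprod_mem_kerXl ?(subsetP sHP) // in_setX /=.
  by have /setXP[_ ->] := subsetP sHG _ Hab; rewrite andbT.
by rewrite !cardsX mulnA [X in (_ <= X)%N]mulnAC leq_pmul2r ?cardG_gt0.
Qed.

Lemma abelian_kerX_subcent1 (H : {group gT1 * gT2}) u v :
  abelian H -> (u, v) \in H ->
  H :&: K \subset setX ('ker f1 :&: 'C[u]) ('ker f2 :&: 'C[v]).
Proof.
move=> cHH Huv; apply/subsetP => -[a b] /setIP[Hab].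
rewrite /K !in_setX !in_setI => /andP[-> ->] /=.
have : (a, b) \in 'C[(u, v)] by apply/cent1P; apply: (centsP cHH).
by rewrite cent1X => /setXP[-> ->].
Qed.

End FibreProduct.

Lemma card_D8 : #|'D_8| = 8.
Proof. exact: (card_dihedral (isT : 1 < 4)). Qed.

Lemma card_center_D8 : #|'Z('D_8)| = 2.
Proof.
have isoD : 'D_8 \isog 'D_(2 ^ 3) by exact: isog_refl.
have [[x y] genD _] := generators_2dihedral (isT : 1 < 3) isoD.
by case: (dihedral2_structure (isT : 1 < 3) genD isoD) => _ _ _ _ [].
Qed.

Lemma card_order4_cent1_D8 (K : {group gsort 'D_8}) u :
  #|K| = 4 -> u \notin K -> #|K :&: 'C[u]| <= 2.
Proof.
move=> oK notKu.
have cKK : abelian K by apply: (card_p2group_abelian (p := 2)); rewrite ?oK.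
have maxK : maximal K 'D_8.
  by apply: p_index_maximal; rewrite ?subsetT // -divgS ?subsetT // card_D8 oK.
apply: leq_trans (subset_leq_card _) (eq_leq card_center_D8).
by apply: abelian_maximal_cent1_sub_center => //; apply/setDP; rewrite inE.
Qed.

Section FibreProductD8.

Variables lam1 lam2 : {morphism 'D_8 >-> 'Z_2}.
Hypotheses (oK1 : #|'ker lam1| = 4) (oK2 : #|'ker lam2| = 4).

Let DD := fibprod lam1 lam2 'D_8 'D_8.

Lemma abelian_fibprod_D8_sub_kerX (H : {group gsort 'D_8 * gsort 'D_8}) :
  H \subset DD -> abelian H -> 8 < #|H| -> H \subset setX ('ker lam1) ('ker lam2).
Proof.
move=> sHD cHH ltH8; apply/subsetP => -[u v] Huv; apply: contraT => notKuv.
have Puv := subsetP sHD _ Huv.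
have notKu : u \notin 'ker lam1 by rewrite -(fibprod_mem_kerXl Puv).
have notKv : v \notin 'ker lam2 by rewrite -(fibprod_mem_kerXr Puv).
have le4 : #|H :&: setX ('ker lam1) ('ker lam2)| <= 4.
  apply: leq_trans (subset_leq_card (abelian_kerX_subcent1 lam1 lam2 cHH Huv)) _.
  rewrite cardsX; exact: leq_mul (card_order4_cent1_D8 oK1 notKu)
                                 (card_order4_cent1_D8 oK2 notKv).
have := card_sub_fibprod_kerX sHD; rewrite oK1 card_D8 => leH.
have := leq_trans leH (leq_mul (leqnn 8) le4).
by rewrite leq_pmul2r // leqNgt ltH8.
Qed.

End FibreProductD8.

Lemma abelem_Z2 : 2.-abelem [set: 'Z_2].
Proof. by apply: prime_abelem; rewrite ?cardsT ?card_ord. Qed.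

Theorem proposition4p2
  (lam1 lam2 : {morphism [set: gsort 'D_8] >-> 'Z_2})
  (hk1 : 'ker lam1 \isog [set: 'Z_2 * 'Z_2])
  (hk2 : 'ker lam2 \isog [set: 'Z_2 * 'Z_2]) :
  let DD := fibprod lam1 lam2 [set: gsort 'D_8] [set: gsort 'D_8] in
  (exists! H : {group gsort 'D_8 * gsort 'D_8},
      [&& H \subset DD, abelian H & #|H| == 16]) /\
  (forall H : {group gsort 'D_8 * gsort 'D_8},
      H \subset DD -> abelian H -> #|H| = 16 ->
      H :=: setX ('ker lam1) ('ker lam2) /\
      H \isog [set: 'Z_2 * 'Z_2 * 'Z_2 * 'Z_2]).
Proof.
move=> DD; set K := setX_group ('ker lam1) ('ker lam2).
have oK1 : #|'ker lam1| = 4 by rewrite (card_isog hk1) cardsT !card_prod card_ord.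
have oK2 : #|'ker lam2| = 4 by rewrite (card_isog hk2) cardsT !card_prod card_ord.
have abelK : 2.-abelem K.
  by rewrite setX_abelem (isog_abelem hk1) (isog_abelem hk2) setT_prod_abelem abelem_Z2.
have oK : #|K| = 16 by rewrite cardsX oK1 oK2.
have eqK (H : {group _}) : H \subset DD -> abelian H -> #|H| = 16 -> H :=: K.
  move=> sHD cHH oH; apply/eqP; rewrite eqEcard oH oK leqnn andbT.
  by apply: abelian_fibprod_D8_sub_kerX; rewrite ?oH.
split.
  exists K; split; first by rewrite (abelem_abelian abelK) oK setX_ker_sub_fibprod.
  by move=> H /and3P[sHD cHH /eqP oH]; exact/val_inj/esym/eqK.
move=> H sHD cHH oH; have eqKH := eqK H sHD cHH oH; split => //.
rewrite eqKH (isog_abelem_card _ abelK) !setT_prod_abelem abelem_Z2.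
by rewrite cardsT !card_prod card_ord oK.
Qed.
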